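(* Let $\mu_m$ be the distribution on $\{0,1\}^m\times\{0,1\}^m$ under which each of the $2m$ bits is independently equal to 1 with probability $\sqrt{1/2}$ and to 0 with probability $1-\sqrt{1/2}$. Then $disc_{\mu_m}(IP_m)\le O(2^{-m/4})$.
   Context: $IP_m(x,y)=\bigoplus_{i=1}^m(x_i\wedge y_i)$. For a distribution $\mu$ on $\{0,1\}^m\times\{0,1\}^m$ and $f$ with range $\{0,1\}$, $disc_\mu(f)=\max_R|\mu(R\cap f^{-1}(0))-\mu(R\cap f^{-1}(1))|$, where $R$ ranges over rectangles $A\times B$ with $A,B\subseteq\{0,1\}^m$. *)

From HB Require Import structures.
From mathcomp Require Import all_boot all_order all_algebra.
From mathcomp Require Import reals.
Set Implicit Arguments. Unset Strict Implicit. Unset Printing Implicit Defensive.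
Import Order.TTheory GRing.Theory Num.Theory.
Local Open Scope ring_scope.

Definition bits (m : nat) := {ffun 'I_m -> bool}.

Definition IP (m : nat) (x y : bits m) : bool :=
  \big[addb/false]_(i < m) (x i && y i).

Definition rect_mass (R : realType) (m : nat) (mu : bits m -> bits m -> R)
  (f : bits m -> bits m -> bool) (A B : {set bits m}) (b : bool) : R :=
  \sum_(x in A) \sum_(y in B | f x y == b) mu x y.

Definition disc (R : realType) (m : nat) (mu : bits m -> bits m -> R)
  (f : bits m -> bits m -> bool) : R :=
  \big[Num.max/0]_(A : {set bits m}) \big[Num.max/0]_(B : {set bits m})
    `|rect_mass mu f A B false - rect_mass mu f A B true|.

Definition pbit (R : realType) (b : bool) : R :=
  if b then Num.sqrt (2^-1) else 1 - Num.sqrt (2^-1).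

Definition mu_m (R : realType) (m : nat) (x y : bits m) : R :=
  (\prod_(i < m) pbit R (x i)) * (\prod_(i < m) pbit R (y i)).

From HB Require Import structures.
From mathcomp Require Import all_boot all_order all_algebra.
From mathcomp Require Import reals.
From mathcomp Require Import ring lra.
Import Order.TTheory GRing.Theory Num.Theory.
Local Open Scope ring_scope.

(* Writing mu_m(x, y) = w(x) w(y), the bias of IP_m on a rectangle A x B is
   the bilinear form u^T H v of the 2^m x 2^m Hadamard matrix
   H = ((-1)^IP(x,y)) with u = 1_A w and v = 1_B w.  Since H^T H = 2^m I,
   Lindsey's lemma (Parseval plus AM-GM) bounds its absolute value by
   2^(m/2) (|u|^2 + |v|^2) / 2 <= 2^(m/2) sum_x w(x)^2, and
   for the biased product weight sum_x w(x)^2 = (p^2 + (1-p)^2)^m with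
   p = sqrt(1/2), i.e. (2 - sqrt 2)^m.  As sqrt 2 (2 - sqrt 2) < 2^(-1/4),
   the discrepancy is at most 2^(-m/4). *)

Section HadamardMatrix.
Variables (F : comPzRingType) (m : nat).
Implicit Types (x y : bits m) (v : bits m -> F).

Lemma sum_prod_bits (p : 'I_m -> bool -> F) :
  \sum_(x : bits m) \prod_(i < m) p i (x i)
    = \prod_(i < m) (p i true + p i false).
Proof.
rewrite -(bigA_distr_bigA p) /=.
by apply: eq_bigr => i _; rewrite big_bool.
Qed.

Lemma sum_sqr_prod_bits (p : bool -> F) :
  \sum_(x : bits m) (\prod_(i < m) p (x i)) ^+ 2
    = (p true ^+ 2 + p false ^+ 2) ^+ m.
Proof.
under eq_bigr do rewrite -prodrXl.
by rewrite (sum_prod_bits (fun _ b => p b ^+ 2)) prodr_const card_ord.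
Qed.

Lemma signr_IP x y : (-1) ^+ IP x y = \prod_(i < m) (-1) ^+ (x i && y i) :> F.
Proof. exact: (big_morph _ (@signr_addb F)). Qed.

Lemma signr_mulD1 (b c : bool) :
  (-1) ^+ b * (-1) ^+ c + 1 = (if b == c then 2 else 0) :> F.
Proof.
by case: b c => [] []; rewrite /= ?expr0 ?expr1 ?mulN1r ?mul1r ?opprK ?addNr.
Qed.

Lemma sum_signr_IP_mul y y' :
  \sum_x (-1) ^+ IP x y * (-1) ^+ IP x y' = (if y == y' then 2 ^+ m else 0) :> F.
Proof.
under eq_bigr do rewrite !signr_IP -big_split /=.
rewrite (sum_prod_bits (fun i b => (-1) ^+ (b && y i) * (-1) ^+ (b && y' i))) /=.
under eq_bigr do rewrite expr0 mulr1 signr_mulD1.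
have [<-|neq_yy'] := eqVneq y y'.
  by under eq_bigr do rewrite eqxx; rewrite prodr_const card_ord.
have /existsP[i neq_i] : [exists i, y i != y' i].
  move: neq_yy'; apply: contraNT => /existsPn eq_yy'.
  by apply/eqP/ffunP => i; apply/eqP/negbNE/eq_yy'.
by rewrite (bigD1 i) //= (negbTE neq_i) mul0r.
Qed.

Lemma sum_hadamard_sqr v :
  \sum_x (\sum_y v y * (-1) ^+ IP x y) ^+ 2 = 2 ^+ m * \sum_y v y ^+ 2.
Proof.
have sqr_sum x : (\sum_y v y * (-1) ^+ IP x y) ^+ 2 =
    \sum_y \sum_y' v y * v y' * ((-1) ^+ IP x y * (-1) ^+ IP x y').
  rewrite expr2 mulr_suml; apply: eq_bigr => y _.
  by rewrite mulr_sumr; apply: eq_bigr => y' _; rewrite mulrACA.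
under eq_bigr do rewrite sqr_sum.
rewrite exchange_big mulr_sumr; apply: eq_bigr => y _.
rewrite exchange_big; under eq_bigr do rewrite -mulr_sumr sum_signr_IP_mul.
rewrite (bigD1 y) //= eqxx big1 => [|y' neq_y'y].
  by rewrite addr0 mulrC expr2.
by rewrite eq_sym (negbTE neq_y'y) mulr0.
Qed.

End HadamardMatrix.

Lemma mul2_le_weighted_sqr {F : realFieldType} (lam a b : F) :
  0 < lam -> 2 * (a * b) <= lam * a ^+ 2 + lam^-1 * b ^+ 2.
Proof.
move=> lam_gt0; rewrite -(ler_pM2l lam_gt0) mulrDr mulVKf ?gt_eqF //.
by rewrite -subr_ge0 (_ : _ - _ = (lam * a - b) ^+ 2) ?sqr_ge0 //; ring.
Qed.

Lemma ler_norm_sum_mul {F : realFieldType} {I : finType} (u g : I -> F)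
    (lam : F) : 0 < lam ->
  2 * `|\sum_i u i * g i| <= lam * \sum_i u i ^+ 2 + lam^-1 * \sum_i g i ^+ 2.
Proof.
move=> lam_gt0.
apply: le_trans (_ : _ <= 2 * \sum_i `|u i * g i|) _.
  by rewrite ler_pM2l ?ler_norm_sum.
rewrite !mulr_sumr -big_split; apply: ler_sum => i _.
rewrite normrM -[u i ^+ 2]real_normK ?num_real //.
rewrite -[g i ^+ 2]real_normK ?num_real //.
exact: mul2_le_weighted_sqr.
Qed.

Lemma lindsey {F : rcfType} m (u v : bits m -> F) :
  2 * `|\sum_x \sum_y u x * v y * (-1) ^+ IP x y|
    <= Num.sqrt 2 ^+ m * (\sum_x u x ^+ 2 + \sum_y v y ^+ 2).
Proof.
set lam := Num.sqrt 2 ^+ m.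
have lam_gt0 : 0 < lam by rewrite exprn_gt0 // sqrtr_gt0.
have lam_sqr : lam ^+ 2 = 2 ^+ m by rewrite -exprM mulnC exprM sqr_sqrtr.
under eq_bigr do under eq_bigr do rewrite -mulrA.
under eq_bigr do rewrite -mulr_sumr.
pose g x := \sum_y v y * (-1) ^+ IP x y.
apply: le_trans (ler_norm_sum_mul u g lam lam_gt0) _.
by rewrite sum_hadamard_sqr -lam_sqr expr2 -mulrA mulKf ?gt_eqF // -mulrDr.
Qed.

Section Discrepancy.
Variables (R : realType) (m : nat).
Implicit Types (mu : bits m -> bits m -> R) (f : bits m -> bits m -> bool).

Lemma rect_mass_diff mu f (A B : {set bits m}) :
  rect_mass mu f A B false - rect_mass mu f A B true
    = \sum_(x in A) \sum_(y in B) mu x y * (-1) ^+ f x y.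
Proof.
rewrite -sumrB; apply: eq_bigr => x _; rewrite !big_mkcondr -sumrB.
by apply: eq_bigr => y _; case: (f x y); rewrite ?subr0 ?sub0r ?mulr1 ?mulrN1.
Qed.

Lemma disc_le mu f (c : R) : 0 <= c ->
  (forall A B : {set bits m},
     `|\sum_(x in A) \sum_(y in B) mu x y * (-1) ^+ f x y| <= c) ->
  disc mu f <= c.
Proof.
move=> c_ge0 rect_le; apply: bigmax_le => // A _; apply: bigmax_le => // B _.
by rewrite rect_mass_diff.
Qed.

Lemma disc_IP_prod (w : bits m -> R) :
  disc (fun x y => w x * w y) (@IP m) <= Num.sqrt 2 ^+ m * \sum_x w x ^+ 2.
Proof.
apply: disc_le => [|A B].
  by rewrite mulr_ge0 ?exprn_ge0 ?sqrtr_ge0 ?sumr_ge0 // => x _; rewrite sqr_ge0.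
pose restr (S : {set bits m}) x := if x \in S then w x else 0.
have sum_restr_le S : \sum_x restr S x ^+ 2 <= \sum_x w x ^+ 2.
  apply: ler_sum => x _; rewrite /restr.
  by case: (x \in S); rewrite ?expr0n ?sqr_ge0.
have -> : \sum_(x in A) \sum_(y in B) w x * w y * (-1) ^+ IP x y
    = \sum_x \sum_y restr A x * restr B y * (-1) ^+ IP x y.
  rewrite big_mkcond; apply: eq_bigr => x _; rewrite big_mkcond /restr.
  case: (x \in A); last by rewrite big1 // => y _; rewrite !mul0r.
  by apply: eq_bigr => y _; case: (y \in B); rewrite ?mulr0 ?mul0r.
rewrite -(ler_pM2l (_ : 0 < 2)) //.
apply: le_trans (lindsey _ (restr A) (restr B)) _.
rewrite mulrCA ler_wpM2l ?exprn_ge0 ?sqrtr_ge0 // mulr_natl mulr2n.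
exact: lerD.
Qed.

End Discrepancy.

Lemma pbit_sqr_sum (R : realType) :
  pbit R true ^+ 2 + pbit R false ^+ 2 = 2 - Num.sqrt 2.
Proof.
rewrite /pbit sqrtrV //; set r := Num.sqrt (2 : R).
have r2 : r ^+ 2 = 2 by rewrite sqr_sqrtr.
have rV : r^-1 = r / 2.
  by rewrite -[in RHS]r2 expr2 invfM mulrA mulfV ?mul1r // sqrtr_eq0 -ltNge.
by rewrite rV; rewrite !expr2 in r2 *; nra.
Qed.

Lemma sqrt2_mul_2Bsqrt2_le (F : rcfType) :
  Num.sqrt 2 * (2 - Num.sqrt 2) <= (Num.sqrt (Num.sqrt 2))^-1 :> F.
Proof.
set r := Num.sqrt (2 : F); set q := Num.sqrt r.
have r_ge0 : 0 <= r := sqrtr_ge0 _.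
have r2 : r ^+ 2 = 2 by rewrite sqr_sqrtr.
have q_gt0 : 0 < q by rewrite !sqrtr_gt0.
have q4 : q ^+ 4 = 2 by rewrite (exprM q 2 2) !sqr_sqrtr.
have r_lb : 543 / 384 <= r by rewrite expr2 in r2; nra.
have r_le2 : r <= 2 by rewrite expr2 in r2; nra.
have base_sqr : (r * (2 - r)) ^+ 2 = 12 - 8 * r by rewrite !expr2 in r2 *; nra.
(* Since q^4 = 2, the claim reads 2 (r (2 - r))^4 = 544 - 384 r <= 1. *)
rewrite -(ler_pM2r q_gt0) mulVf ?gt_eqF //.
rewrite -(expr_le1 (_ : 0 < 4)%N) ?mulr_ge0 ?subr_ge0 ?r_ge0 ?r_le2 ?ltW //.
rewrite exprMn q4 (exprM _ 2 2) base_sqr.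
by rewrite expr2 in r2 *; nra.
Qed.

Theorem lemma6p2 (R : realType) :
  exists C : R, forall m : nat,
    disc (@mu_m R m) (@IP m) <= C * (Num.sqrt (Num.sqrt (2 : R))) ^- m.
Proof.
exists 1 => m; rewrite mul1r -exprVn.
apply: le_trans (disc_IP_prod _ _ (fun x => \prod_(i < m) pbit R (x i))) _.
rewrite sum_sqr_prod_bits -exprMn.
apply: lerXn2r; rewrite ?nnegrE ?invr_ge0 ?mulr_ge0 ?addr_ge0 ?sqr_ge0 //;
  rewrite ?sqrtr_ge0 //.
by rewrite pbit_sqr_sum sqrt2_mul_2Bsqrt2_le.
Qed.
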